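(* Let $0<\alpha<1$, $\sigma=1-\alpha/2$, $l,T>0$, $N,M\ge1$, $h=l/N$, $x_i=ih$, $\tau=T/M$, $t_j=j\tau$, $t_{j+\sigma}=(j+\sigma)\tau$. Let $k(x,t)\ge c_1>0$, $q(x,t)\ge0$ and $f(x,t)$ be continuous on $[0,l]\times[0,T]$, and $u_0$ a function on $[0,l]$. Set $a_i^{j+1}=k(x_{i-1/2},t_{j+\sigma})$, $d_i^{j+1}=q(x_i,t_{j+\sigma})$, $\varphi_i^{j+1}=f(x_i,t_{j+\sigma})$ with $x_{i-1/2}=(i-1/2)h$, and $$(\Lambda y)_i=\frac{a_{i+1}^{j+1}y_{i+1}-(a_{i+1}^{j+1}+a_i^{j+1})y_i+a_i^{j+1}y_{i-1}}{h^2}-d_i^{j+1}y_i .$$ Let $y$ solve $$\Delta^\alpha_{0t_{j+\sigma}}y_i=(\Lambda y^{(\sigma)})_i+\varphi_i^{j+1},\quad i=1,\dots,N-1,\ j=0,\dots,M-1,$$ $$y_0^j=y_N^j=0,\qquad y_i^0=u_0(x_i),$$ where $y^{(\sigma)}=\sigma y^{j+1}+(1-\sigma)y^j$. Then the scheme is unconditionally stable and for every $j=0,\dots,M-1$ $$\|y^{j+1}\|_0^2\le\|y^0\|_0^2+\frac{l^2T^\alpha\Gamma(1-\alpha)}{4c_1}\max_{1\le j\le M}\|\varphi^j\|_0^2 .$$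
   Context: $(y,v)=\sum_{i=1}^{N-1}y_iv_ih$, $\|y\|_0^2=(y,y)$. The discrete fractional derivative is $\Delta^\alpha_{0t_{j+\sigma}}y_i=\frac{\tau^{1-\alpha}}{\Gamma(2-\alpha)}\sum_{s=0}^{j}c_{j-s}\frac{y_i^{s+1}-y_i^s}{\tau}$ with: $a_0=\sigma^{1-\alpha}$, $a_l=(l'+\sigma)^{1-\alpha}-(l'-1+\sigma)^{1-\alpha}$ for index $l'\ge1$, $b_{l'}=\frac{1}{2-\alpha}[(l'+\sigma)^{2-\alpha}-(l'-1+\sigma)^{2-\alpha}]-\frac12[(l'+\sigma)^{1-\alpha}+(l'-1+\sigma)^{1-\alpha}]$ for $l'\ge1$; for $j=0$, $c_0=a_0$; for $j\ge1$, $c_0=a_0+b_1$, $c_s=a_s+b_{s+1}-b_s$ ($1\le s\le j-1$), $c_j=a_j-b_j$. *)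

From Stdlib Require Import Reals List.
From Coquelicot Require Import Coquelicot.
Open Scope R_scope.

Definition Gamma (s : R) : R :=
  RInt_gen (fun t => Rpower t (s - 1) * exp (- t)) (at_right 0) (Rbar_locally p_infty).

(* sum_{i=m}^{n-1} F i  (empty if n <= m) *)
Definition sumR (m n : nat) (F : nat -> R) : R :=
  fold_right Rplus 0 (map F (seq m (n - m))).

Definition norm0sq (N : nat) (h : R) (v : nat -> R) : R :=
  sumR 1 N (fun i => v i * v i * h).

(* max_{1 <= j <= M} g j   (g takes nonnegative values here) *)
Definition maxR (M : nat) (g : nat -> R) : R :=
  fold_right Rmax 0 (map g (seq 1 M)).

(* coefficients of the L2-1_sigma approximation *)
Definition a_coef (alpha sigma : R) (n : nat) : R :=
  match n with
  | O => Rpower sigma (1 - alpha)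
  | S _ => Rpower (INR n + sigma) (1 - alpha) - Rpower (INR n - 1 + sigma) (1 - alpha)
  end.

Definition b_coef (alpha sigma : R) (n : nat) : R :=
  1 / (2 - alpha) * (Rpower (INR n + sigma) (2 - alpha) - Rpower (INR n - 1 + sigma) (2 - alpha))
  - 1 / 2 * (Rpower (INR n + sigma) (1 - alpha) + Rpower (INR n - 1 + sigma) (1 - alpha)).

Definition c_coef (alpha sigma : R) (j s : nat) : R :=
  if Nat.eqb j 0 then a_coef alpha sigma 0
  else if Nat.eqb s 0 then a_coef alpha sigma 0 + b_coef alpha sigma 1
  else if Nat.ltb s j then a_coef alpha sigma s + b_coef alpha sigma (s + 1) - b_coef alpha sigma s
  else a_coef alpha sigma j - b_coef alpha sigma j.

(* Delta^alpha_{0 t_{j+sigma}} y_i  for the grid function y j i = y_i^j *)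
Definition frac_deriv (alpha sigma tau : R) (y : nat -> nat -> R) (j i : nat) : R :=
  Rpower tau (1 - alpha) / Gamma (2 - alpha) *
  sum_f_R0 (fun s => c_coef alpha sigma j (j - s) * ((y (S s) i - y s i) / tau)) j.

Definition rect (l T : R) (p : R * R) : Prop :=
  0 <= fst p <= l /\ 0 <= snd p <= T.
Definition cont_on_rect (l T : R) (g : R -> R -> R) : Prop :=
  forall x t, rect l T (x, t) ->
    filterlim (fun p : R * R => g (fst p) (snd p))
      (within (rect l T) (locally (x, t))) (locally (g x t)).

(* Alikhanov's weights [c_s] of the L2-1_sigma formula are nonincreasing in [s],
   satisfy [c_j >= (1 - alpha) (j + sigma)^(-alpha) >= (1 - alpha) M^(-alpha)]
   and [(1 - sigma)^2 c_0 <= sigma^2 (c_0 - c_1)]; the last condition yields the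
   energy inequality [Delta^alpha (y^2) / 2 <= y^(sigma) Delta^alpha y].
   Multiplying the scheme by [h y^(sigma)] and summing over the grid, summation
   by parts with [k >= c1], [q >= 0], the discrete Poincare inequality
   [||v||^2 <= l^2/4 ||v_x||^2] and Young's inequality bound
   [Delta^alpha ||y||^2 / 2] by [l^2 / (16 c1) max ||phi||^2]. A discrete
   Gronwall argument for sums with nonincreasing weights then gives
   [||y^(j+1)||^2 <= ||y^0||^2 + Gamma(2 - alpha) T^alpha l^2 / (8 c1 (1 - alpha)) max ||phi||^2],
   and [Gamma(2 - alpha) <= 1 <= 2 (1 - alpha) Gamma(1 - alpha)] gives the constant. *)

From Stdlib Require Import Reals List Lra Lia Psatz.
From Coquelicot Require Import Coquelicot.
Open Scope R_scope.

Fixpoint sum_lt (n : nat) (F : nat -> R) : R :=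
  match n with O => 0 | S n => sum_lt n F + F n end.

Lemma sum_lt_shift n F : sum_lt (S n) F = F 0%nat + sum_lt n (fun k => F (S k)).
Proof. induction n as [|n IH]; simpl in *; [ring|]. rewrite IH; ring. Qed.

Lemma sum_lt_ext n F G : (forall i, (i < n)%nat -> F i = G i) -> sum_lt n F = sum_lt n G.
Proof.
  induction n; intros H; simpl; [reflexivity|].
  rewrite IHn by (intros; apply H; lia). rewrite (H n) by lia. reflexivity.
Qed.

Lemma fold_map_seq m n F :
  fold_right Rplus 0 (map F (seq m n)) = sum_lt n (fun k => F (m + k)%nat).
Proof.
  revert m; induction n as [|n IH]; intros m; [reflexivity|].
  rewrite sum_lt_shift, Nat.add_0_r. simpl. rewrite IH.
  f_equal. apply sum_lt_ext; intros k _. f_equal. lia.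
Qed.

Lemma sumR_1 N F : sumR 1 N F = sum_lt (N - 1) (fun k => F (S k)).
Proof. unfold sumR. rewrite fold_map_seq. reflexivity. Qed.

Lemma sum_lt_plus n F G : sum_lt n (fun i => F i + G i) = sum_lt n F + sum_lt n G.
Proof. induction n; simpl; [ring | rewrite IHn; ring]. Qed.

Lemma sum_lt_scal n c F : sum_lt n (fun i => c * F i) = c * sum_lt n F.
Proof. induction n; simpl; [ring | rewrite IHn; ring]. Qed.

Lemma sum_lt_minus n F G : sum_lt n (fun i => F i - G i) = sum_lt n F - sum_lt n G.
Proof. induction n; simpl; [ring | rewrite IHn; ring]. Qed.

Lemma sum_lt_le n F G : (forall i, (i < n)%nat -> F i <= G i) -> sum_lt n F <= sum_lt n G.
Proof.
  induction n; intros H; simpl; [lra|].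
  assert (sum_lt n F <= sum_lt n G) by (apply IHn; intros; apply H; lia).
  assert (F n <= G n) by (apply H; lia). lra.
Qed.

Lemma sum_lt_const n c : sum_lt n (fun _ => c) = INR n * c.
Proof. induction n; simpl sum_lt; [simpl; ring|]. rewrite IHn, S_INR; ring. Qed.

Lemma sum_lt_nonneg n F : (forall i, (i < n)%nat -> 0 <= F i) -> 0 <= sum_lt n F.
Proof.
  intros H. rewrite <- (Rmult_0_r (INR n)), <- sum_lt_const. apply sum_lt_le; auto.
Qed.

Lemma sum_lt_add n m F : sum_lt (n + m) F = sum_lt n F + sum_lt m (fun k => F (n + k)%nat).
Proof.
  induction m as [|m IH]; simpl; [rewrite Nat.add_0_r; ring|].
  rewrite Nat.add_succ_r. simpl. rewrite IH. ring.
Qed.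

Lemma sum_lt_by_parts n (v A : nat -> R) :
  sum_lt n (fun k => v (S k) * (A (S (S k)) - A (S k))) =
  v n * A (S n) - v 0%nat * A 1%nat - sum_lt n (fun k => (v (S k) - v k) * A (S k)).
Proof. induction n; simpl; [ring|]. rewrite IHn. ring. Qed.

Lemma sum_lt_sum_f_R0_comm n j (F : nat -> nat -> R) :
  sum_lt n (fun i => sum_f_R0 (fun s => F s i) j) = sum_f_R0 (fun s => sum_lt n (F s)) j.
Proof. induction j; simpl; [reflexivity|]. rewrite sum_lt_plus, IHj. reflexivity. Qed.

Lemma sum_f_R0_le F G n :
  (forall k, (k <= n)%nat -> F k <= G k) -> sum_f_R0 F n <= sum_f_R0 G n.
Proof.
  induction n; intros H; simpl; [apply H; lia|].
  assert (sum_f_R0 F n <= sum_f_R0 G n) by (apply IHn; intros; apply H; lia).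
  assert (F (S n) <= G (S n)) by (apply H; lia). lra.
Qed.

Lemma sum_f_R0_rev F n : sum_f_R0 F n = sum_f_R0 (fun k => F (n - k)%nat) n.
Proof.
  induction n; [reflexivity|].
  simpl sum_f_R0 at 1. rewrite IHn.
  rewrite (decomp_sum (fun k => F (S n - k)%nat) (S n)) by lia.
  simpl pred. rewrite Nat.sub_0_r. rewrite Rplus_comm. f_equal.
Qed.

Lemma sum_f_R0_abel C G n :
  sum_f_R0 (fun k => C k * (G k - G (S k))) n =
  sum_f_R0 (fun k => (C k - C (S k)) * (G 0%nat - G (S k))) n + C (S n) * (G 0%nat - G (S n)).
Proof. induction n; simpl; [ring|]. rewrite IHn. ring. Qed.

Lemma sum_f_R0_telescope C n : sum_f_R0 (fun k => C k - C (S k)) n = C 0%nat - C (S n).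
Proof. induction n; simpl; [ring|]. rewrite IHn; ring. Qed.

Lemma sum_f_R0_ge_last_split (d u : nat -> R) j X E :
  (forall k, (k <= j)%nat -> 0 <= d k) -> (forall k, (k < j)%nat -> X <= u k) -> X + E <= u j ->
  sum_f_R0 d j * X + d j * E <= sum_f_R0 (fun k => d k * u k) j.
Proof.
  intros Hd Hu Hj. destruct j as [|j]; simpl.
  { assert (0 <= d 0%nat) by (apply Hd; lia). nra. }
  assert (sum_f_R0 d j * X <= sum_f_R0 (fun k => d k * u k) j).
  { rewrite Rmult_comm, scal_sum. apply sum_f_R0_le; intros k Hk.
    apply Rmult_le_compat_l; [apply Hd | apply Hu]; lia. }
  assert (d (S j) * (X + E) <= d (S j) * u (S j)) by (apply Rmult_le_compat_l; auto).
  nra.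
Qed.

Lemma sum_f_R0_ge_first F n :
  (forall k, (k <= n)%nat -> 0 <= F k) -> F 0%nat <= sum_f_R0 F n.
Proof.
  induction n; intros H; simpl; [lra|].
  assert (F 0%nat <= sum_f_R0 F n) by (apply IHn; intros; apply H; lia).
  assert (0 <= F (S n)) by (apply H; lia). lra.
Qed.

(** * L1-type difference sums *)

Definition diff_conv (C : nat -> R) (j : nat) (g : nat -> R) : R :=
  sum_f_R0 (fun r => C (j - r)%nat * (g (S r) - g r)) j.

Definition trunc (C : nat -> R) (j k : nat) : R := if Nat.leb k j then C k else 0.

Lemma diff_conv_abel C j g :
  diff_conv C j g =
  sum_f_R0 (fun k => (trunc C j k - trunc C j (S k)) * (g (S j) - g (j - k)%nat)) j.
Proof.
  unfold diff_conv. rewrite sum_f_R0_rev.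
  transitivity (sum_f_R0 (fun k => trunc C j k *
    ((fun k => g (S j - k)%nat) k - (fun k => g (S j - k)%nat) (S k))) j).
  - apply sum_eq; intros k Hk. unfold trunc.
    replace (Nat.leb k j) with true by (symmetry; apply Nat.leb_le; lia).
    replace (j - (j - k))%nat with k by lia.
    replace (S (j - k)) with (S j - k)%nat by lia.
    replace (j - k)%nat with (S j - S k)%nat by lia. reflexivity.
  - rewrite sum_f_R0_abel. unfold trunc at 3.
    replace (Nat.leb (S j) j) with false by (symmetry; apply Nat.leb_gt; lia).
    rewrite Rmult_0_l, Rplus_0_r. apply sum_eq; intros k Hk.
    replace (j - k)%nat with (S j - S k)%nat by lia.
    rewrite Nat.sub_0_r. reflexivity.
Qed.

Section Weights.

Variables (C : nat -> R) (j : nat).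
Hypothesis C_nonincr : forall k, (k < j)%nat -> C (S k) <= C k.
Hypothesis C_last_nonneg : 0 <= C j.

Lemma weights_le_first k : (k <= j)%nat -> C k <= C 0%nat.
Proof.
  induction k as [|k IH]; intros Hk; [lra|].
  apply Rle_trans with (C k); [apply C_nonincr | apply IH]; lia.
Qed.

Let step k := trunc C j k - trunc C j (S k).

Lemma trunc_step_nonneg k : (k <= j)%nat -> 0 <= step k.
Proof.
  intros Hk. unfold step, trunc.
  replace (Nat.leb k j) with true by (symmetry; apply Nat.leb_le; lia).
  destruct (Nat.leb (S k) j) eqn:E.
  - apply Nat.leb_le in E. specialize (C_nonincr k ltac:(lia)). lra.
  - apply Nat.leb_gt in E. replace k with j by lia. lra.
Qed.

Lemma sum_trunc_steps : sum_f_R0 step j = C 0%nat.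
Proof.
  unfold step. rewrite sum_f_R0_telescope. unfold trunc.
  replace (Nat.leb 0 j) with true by (symmetry; apply Nat.leb_le; lia).
  replace (Nat.leb (S j) j) with false by (symmetry; apply Nat.leb_gt; lia). ring.
Qed.

Lemma trunc_step_last : step j = C j.
Proof.
  unfold step, trunc. rewrite (proj2 (Nat.leb_le j j)) by lia.
  replace (Nat.leb (S j) j) with false by (symmetry; apply Nat.leb_gt; lia). ring.
Qed.

Lemma diff_conv_sq_le (s : R) (z : nat -> R) :
  (1 - s) ^ 2 * C 0%nat <= s ^ 2 * (C 0%nat - trunc C j 1) ->
  / 2 * diff_conv C j (fun r => z r * z r) <= (s * z (S j) + (1 - s) * z j) * diff_conv C j z.
Proof.
  intros Hs. rewrite !diff_conv_abel. fold step.
  set (Z := z (S j)). set (U := Z - z j).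
  rewrite !scal_sum.
  set (Q := fun k => / 2 * (Z - z (j - k)%nat - (1 - s) * U) ^ 2).
  (* completing the square in each term of the Abel-transformed sums *)
  assert (E : forall k, (k <= j)%nat ->
     step k * (Z - z (j - k)%nat) * (s * Z + (1 - s) * z j) =
     step k * (Z * Z - z (j - k)%nat * z (j - k)%nat) * / 2
     + (step k * Q k - (1 - s) ^ 2 * U ^ 2 / 2 * step k)).
  { intros k Hk. unfold Q, U. field. }
  change (sum_f_R0 (fun k => step k * (Z * Z - z (j - k)%nat * z (j - k)%nat) * / 2) j <=
    sum_f_R0 (fun k => step k * (Z - z (j - k)%nat) * (s * Z + (1 - s) * z j)) j).
  rewrite (sum_eq _ _ j E), plus_sum, minus_sum.
  assert (Hm : sum_f_R0 (fun k => (1 - s) ^ 2 * U ^ 2 / 2 * step k) j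
               = (1 - s) ^ 2 * U ^ 2 / 2 * C 0%nat).
  { rewrite <- sum_trunc_steps, scal_sum. apply sum_eq; intros; ring. }
  assert (HQ : step 0%nat * Q 0%nat <= sum_f_R0 (fun k => step k * Q k) j).
  { apply (sum_f_R0_ge_first (fun k => step k * Q k)). intros k Hk.
    apply Rmult_le_pos; [apply trunc_step_nonneg; auto|].
    unfold Q. apply Rmult_le_pos; [lra | apply pow2_ge_0]. }
  assert (HQ0 : Q 0%nat = / 2 * s ^ 2 * U ^ 2) by (unfold Q, U; rewrite Nat.sub_0_r; ring).
  assert (Hstep0 : step 0%nat = C 0%nat - trunc C j 1).
  { unfold step, trunc. replace (Nat.leb 0 j) with true by (symmetry; apply Nat.leb_le; lia).
    reflexivity. }
  rewrite HQ0, Hstep0 in HQ. rewrite Hm.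
  assert (0 <= U ^ 2) by apply pow2_ge_0.
  assert (0 <= U ^ 2 * (s ^ 2 * (C 0%nat - trunc C j 1) - (1 - s) ^ 2 * C 0%nat))
    by (apply Rmult_le_pos; lra).
  nra.
Qed.

End Weights.

(* A discrete Gronwall inequality, by strong induction on [j]: in the Abel form
   of [diff_conv] all weights are nonnegative, the earlier values [g r] are at most
   [g 0 + B / cm], and the last weight [CC j j >= cm] absorbs [B]. *)
Lemma diff_conv_stability (CC : nat -> nat -> R) (g : nat -> R) (J : nat) (B cm : R) :
  0 <= B -> 0 < cm ->
  (forall j, (j <= J)%nat -> forall k, (k < j)%nat -> CC j (S k) <= CC j k) ->
  (forall j, (j <= J)%nat -> cm <= CC j j) ->
  (forall j, (j <= J)%nat -> diff_conv (CC j) j g <= B) ->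
  forall j, (j <= J)%nat -> g (S j) <= g 0%nat + B / cm.
Proof.
  intros HB Hcm Hmon Hlast Hconv.
  set (E := B / cm).
  assert (HE : 0 <= E) by (apply Rdiv_le_0_compat; lra).
  assert (HcmE : B = cm * E) by (unfold E; field; lra).
  intros j; induction j as [j IH] using (well_founded_induction Wf_nat.lt_wf); intros HjJ.
  specialize (Hmon j HjJ). specialize (Hlast j HjJ).
  assert (HCj : 0 <= CC j j) by lra.
  set (X := g (S j) - g 0%nat - E).
  assert (Hlow : sum_f_R0 (fun k => trunc (CC j) j k - trunc (CC j) j (S k)) j * X
                 + (trunc (CC j) j j - trunc (CC j) j (S j)) * E <= diff_conv (CC j) j g).
  { rewrite diff_conv_abel. apply sum_f_R0_ge_last_split.
    - intros k Hk. apply trunc_step_nonneg; auto.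
    - intros k Hk. replace (j - k)%nat with (S (j - k - 1)) by lia.
      assert (g (S (j - k - 1)) <= g 0%nat + E) by (apply IH; lia). unfold X; lra.
    - rewrite Nat.sub_diag. unfold X; lra. }
  rewrite (sum_trunc_steps (CC j) j), (trunc_step_last (CC j) j) in Hlow.
  assert (HC0 : CC j j <= CC j 0%nat) by (apply (weights_le_first (CC j) j); auto).
  specialize (Hconv j HjJ).
  assert (CC j 0%nat * X <= 0) by nra.
  assert (X <= 0) by nra.
  unfold X in *; lra.
Qed.

Lemma Rpower_pos x r : 0 < Rpower x r.
Proof. apply exp_pos. Qed.

Lemma Rpower_1_l r : Rpower 1 r = 1.
Proof. unfold Rpower. rewrite ln_1, Rmult_0_r. apply exp_0. Qed.

Lemma exp_le_of_le x y : x <= y -> exp x <= exp y.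
Proof.
  intros H. destruct (Req_dec x y) as [->|E]; [lra|]. left; apply exp_increasing; lra.
Qed.

Lemma Rpower_antimono_nonpos r a b : r <= 0 -> 0 < a <= b -> Rpower b r <= Rpower a r.
Proof.
  intros Hr Hab. unfold Rpower. apply exp_le_of_le.
  assert (ln a <= ln b) by (apply ln_le; lra). nra.
Qed.

Lemma Rpower_ge_of_base_le_1 t a b : 0 < t <= 1 -> a <= b -> Rpower t b <= Rpower t a.
Proof.
  intros Ht Hab. unfold Rpower. apply exp_le_of_le.
  assert (ln t <= 0) by (rewrite <- ln_1; apply ln_le; lra). nra.
Qed.

Lemma Rpower_lt_of_lt_root r y a : 0 < r -> 0 < y -> 0 < a < Rpower y (/ r) -> Rpower a r < y.
Proof.
  intros Hr Hy Ha.
  assert (E : Rpower (Rpower y (/ r)) r = y).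
  { rewrite Rpower_mult. replace (/ r * r) with 1 by (field; lra). apply Rpower_1; auto. }
  rewrite <- E. apply Rlt_Rpower_l; auto.
Qed.

Lemma is_derive_Rpower_shift r c x :
  0 < x + c -> is_derive (fun t => Rpower (t + c) r) x (r * Rpower (x + c) (r - 1)).
Proof.
  intros H.
  assert (H1 : is_derive (fun t => Rpower t r) (x + c) (r * Rpower (x + c) (r - 1)))
    by (apply is_derive_Reals, derivable_pt_lim_power; auto).
  assert (H2 : is_derive (fun t => t + c) x 1)
    by (auto_derive; try ring; auto).
  rewrite <- (Rmult_1_l (r * _)).
  exact (is_derive_comp (fun t => Rpower t r) (fun t => t + c) x _ _ H1 H2).
Qed.

Lemma continuous_Rpower r x : 0 < x -> continuous (fun t => Rpower t r) x.
Proof.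
  intros H. apply (@ex_derive_continuous R_AbsRing R_NormedModule). exists (r * Rpower x (r - 1)).
  apply is_derive_Reals, derivable_pt_lim_power; auto.
Qed.

Lemma le_of_derive_nonneg (H dH : R -> R) a b : a <= b ->
  (forall t, a <= t <= b -> is_derive H t (dH t)) ->
  (forall t, a <= t <= b -> 0 <= dH t) -> H a <= H b.
Proof.
  intros Hab Hd Hpos.
  destruct (Req_dec a b) as [->|Hne]; [lra|].
  destruct (MVT_gen H a b dH) as [c [Hc Heq]].
  - intros x Hx. apply Hd. rewrite Rmin_left, Rmax_right in Hx by lra. lra.
  - intros x Hx. rewrite Rmin_left, Rmax_right in Hx by lra.
    apply derivable_continuous_pt. exists (dH x). apply is_derive_Reals, Hd; lra.
  - rewrite Rmin_left, Rmax_right in Hc by lra.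
    assert (0 <= dH c) by (apply Hpos; lra).
    assert (0 <= dH c * (b - a)) by (apply Rmult_le_pos; lra). lra.
Qed.

Lemma RInt_Rpower_pred r a b : 0 < r -> 0 < a -> 0 < b ->
  RInt (fun t => Rpower t (r - 1)) a b = (Rpower b r - Rpower a r) / r.
Proof.
  intros Hr Ha Hb. apply is_RInt_unique.
  replace ((Rpower b r - Rpower a r) / r) with (minus (Rpower b r / r) (Rpower a r / r))
    by (unfold minus, plus, opp; simpl; field; lra).
  apply (is_RInt_derive (fun t => Rpower t r / r)).
  - intros x Hx. assert (0 < x) by (apply Rlt_le_trans with (Rmin a b); [apply Rmin_glb_lt|]; lra).
    pose proof (is_derive_scal _ _ (/ r) _ (proj2 (is_derive_Reals _ _ _) (derivable_pt_lim_power x r H))) as D.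
    replace (Rpower x (r - 1)) with (/ r * (r * Rpower x (r - 1))) by (field; lra).
    eapply is_derive_ext; [|exact D]. intros t; simpl. unfold Rdiv; ring.
  - intros x Hx. apply continuous_Rpower.
    apply Rlt_le_trans with (Rmin a b); [apply Rmin_glb_lt|]; lra.
Qed.

(** * The coefficients of the L2-1_sigma formula *)

Section Coefficients.

Variable al : R.
Hypothesis Hal : 0 < al < 1.

(* [a_l] and [b_l] are differences of [w] and of its primitive [W] at the
   nodes [l - 1 + sigma]; [dw] is the derivative of [w]. *)
Definition w t := Rpower t (1 - al).
Definition W t := Rpower t (2 - al) / (2 - al).
Definition dw t := (1 - al) * Rpower t (- al).

Definition a_gen x := w (x + 1) - w x.
Definition b_gen x := W (x + 1) - W x - (w (x + 1) + w x) / 2.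
Definition c_mid x := a_gen x + b_gen (x + 1) - b_gen x.
Definition c_last x := a_gen x - b_gen x.

Lemma w_eq t : 0 < t -> w t = t * Rpower t (- al).
Proof.
  intros H. unfold w. replace (1 - al) with (1 + - al) by ring.
  rewrite Rpower_plus, Rpower_1; auto.
Qed.

Lemma is_derive_w c x : 0 < x + c -> is_derive (fun t => w (t + c)) x (dw (x + c)).
Proof.
  intros H. unfold w, dw. replace (- al) with (1 - al - 1) by ring.
  apply is_derive_Rpower_shift; auto.
Qed.

Lemma is_derive_W c x : 0 < x + c -> is_derive (fun t => W (t + c)) x (w (x + c)).
Proof.
  intros H. unfold W, w.
  pose proof (is_derive_scal _ x (/ (2 - al)) _ (is_derive_Rpower_shift (2 - al) c x H)) as D.
  replace (Rpower (x + c) (1 - al)) with (/ (2 - al) * ((2 - al) * Rpower (x + c) (2 - al - 1))).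
  - eapply is_derive_ext; [|exact D]. intros t; simpl. field. lra.
  - replace (2 - al - 1) with (1 - al) by ring. field. lra.
Qed.

Lemma dw_antimono a b : 0 < a <= b -> dw b <= dw a.
Proof.
  intros H. unfold dw. apply Rmult_le_compat_l; [lra|]. apply Rpower_antimono_nonpos; lra.
Qed.

Definition dw_gap t := Rpower t (- al) - Rpower (t + 1) (- al).

Lemma dw_gap_nonneg t : 0 < t -> 0 <= dw_gap t.
Proof.
  intros H. unfold dw_gap.
  assert (Rpower (t + 1) (- al) <= Rpower t (- al)) by (apply Rpower_antimono_nonpos; lra). lra.
Qed.

Lemma dw_gap_antimono a b : 0 < a <= b -> dw_gap b <= dw_gap a.
Proof.
  intros Hab. unfold dw_gap.
  set (G := fun t => Rpower (t + 1) (- al) - Rpower (t + 0) (- al)).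
  assert (HG : G a <= G b).
  { apply (le_of_derive_nonneg G
      (fun t => - al * Rpower (t + 1) (- al - 1) - - al * Rpower (t + 0) (- al - 1))); [lra| |].
    - intros t Ht. apply (is_derive_minus (fun t => Rpower (t + 1) (- al)));
        apply is_derive_Rpower_shift; lra.
    - intros t Ht.
      assert (Rpower (t + 1) (- al - 1) <= Rpower (t + 0) (- al - 1))
        by (apply Rpower_antimono_nonpos; lra).
      nra. }
  unfold G in HG. rewrite !Rplus_0_r in HG. lra.
Qed.

(* Each inequality between the coefficients below is [H x <= H (x + 1)] for a
   [probe] [H]: a combination of [(p t + q) w (t + c)] and [W (t + c)],
   [c = 0, 1, 2], plus a quadratic, with the parameters chosen so that [H x] and
   [H (x + 1)] are the two sides. The sign of [H'] on [[x, x + 1]] then reduces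
   to the monotonicity of [dw] or of [dw_gap]. *)
Definition piece (p q e c t : R) := (p * t + q) * w (t + c) + e * W (t + c).
Definition dpiece (p q e c t : R) := p * w (t + c) + (p * t + q) * dw (t + c) + e * w (t + c).

Lemma is_derive_piece p q e c x : 0 < x + c -> is_derive (piece p q e c) x (dpiece p q e c x).
Proof.
  intros H. unfold piece, dpiece.
  assert (Hl : is_derive (fun t => p * t + q) x p) by (auto_derive; try ring; auto).
  apply (is_derive_plus (fun t => (p * t + q) * w (t + c))).
  - apply (is_derive_mult (fun t => p * t + q) (fun t => w (t + c))); auto.
    + apply is_derive_w; auto.
    + intros; apply Rmult_comm.
  - apply (is_derive_scal (fun t => W (t + c))), is_derive_W; auto.
Qed.

Definition probe (p0 q0 e0 p1 q1 e1 p2 q2 e2 r2 r1 t : R) :=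
  piece p0 q0 e0 0 t + piece p1 q1 e1 1 t + piece p2 q2 e2 2 t + (r2 * t * t + r1 * t).

Definition dprobe (p0 q0 e0 p1 q1 e1 p2 q2 e2 r2 r1 t : R) :=
  dpiece p0 q0 e0 0 t + dpiece p1 q1 e1 1 t + dpiece p2 q2 e2 2 t + (2 * r2 * t + r1).

Lemma probe_le_succ p0 q0 e0 p1 q1 e1 p2 q2 e2 r2 r1 x : 0 < x ->
  (forall t, x <= t <= x + 1 -> 0 <= dprobe p0 q0 e0 p1 q1 e1 p2 q2 e2 r2 r1 t) ->
  probe p0 q0 e0 p1 q1 e1 p2 q2 e2 r2 r1 x <= probe p0 q0 e0 p1 q1 e1 p2 q2 e2 r2 r1 (x + 1).
Proof.
  intros Hx Hd. apply (le_of_derive_nonneg _ (dprobe p0 q0 e0 p1 q1 e1 p2 q2 e2 r2 r1)); [lra | | exact Hd].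
  intros t Ht. unfold probe, dprobe.
  assert (Q : is_derive (fun t => r2 * t * t + r1 * t) t (2 * r2 * t + r1)) by
    (auto_derive; try ring; auto).
  assert (D0 := is_derive_piece p0 q0 e0 0 t ltac:(lra)).
  assert (D1 := is_derive_piece p1 q1 e1 1 t ltac:(lra)).
  assert (D2 := is_derive_piece p2 q2 e2 2 t ltac:(lra)).
  apply (is_derive_plus (fun t => _ + _ + _)); [|exact Q].
  apply (is_derive_plus (fun t => _ + _)); [|exact D2].
  apply (is_derive_plus (piece p0 q0 e0 0)); [exact D0 | exact D1].
Qed.

Local Ltac normalize_shifts t :=
  try replace (t + 0) with t in * by ring;
  try replace (t + 1 + 0) with (t + 1) in * by ring;
  try replace (t + 1 + 1) with (t + 2) in * by ring;
  try replace (t + 1 + 2) with (t + 3) in * by ring;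
  try replace (t + 2 + 1) with (t + 3) in * by ring.

Local Ltac conclude_probe x Hm :=
  unfold probe, piece in Hm; unfold c_mid, c_last, a_gen, b_gen;
  normalize_shifts x; normalize_shifts (x + 1); normalize_shifts x;
  ring_simplify in Hm; ring_simplify; lra.

Lemma c_mid_succ_le x : 0 < x -> c_mid (x + 1) <= c_mid x.
Proof.
  intros Hx.
  assert (Hm := probe_le_succ 1 (1/2 - x) (-1) (-2) (2 * x) 2 1 (- x - 1/2) (-1) 0 0 x Hx).
  lapply Hm; clear Hm; [intros Hm; conclude_probe x Hm|].
  intros t Ht.
  replace (dprobe 1 (1/2 - x) (-1) (-2) (2 * x) 2 1 (- x - 1/2) (-1) 0 0 t)
    with ((1 - al) * ((t - x + 1/2) * (dw_gap t - dw_gap (t + 1)) + dw_gap (t + 1))).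
  2:{ unfold dprobe, dpiece, dw, dw_gap. normalize_shifts t. field. }
  assert (dw_gap (t + 1) <= dw_gap t) by (apply dw_gap_antimono; lra).
  assert (0 <= dw_gap (t + 1)) by (apply dw_gap_nonneg; lra).
  apply Rmult_le_pos; [lra|]. nra.
Qed.

Lemma c_last_succ_le_c_mid x : 0 < x -> c_last (x + 1) <= c_mid x.
Proof.
  intros Hx. set (k := dw (x + 3/2)).
  assert (Hm := probe_le_succ 1 (1/2 - x) (-1) (-2) (2 * x) 2 0 0 0 (k/2) (- k * (2 * x + 1) / 2) x Hx).
  lapply Hm; clear Hm; [intros Hm; conclude_probe x Hm|].
  intros t Ht.
  replace (dprobe 1 (1/2 - x) (-1) (-2) (2 * x) 2 0 0 0 (k/2) (- k * (2 * x + 1) / 2) t)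
    with ((t - x + 1/2) * (dw t - dw (t + 1)) + (1/2 - (t - x)) * (dw (t + 1) - k)).
  2:{ unfold dprobe, dpiece. normalize_shifts t. field. }
  assert (dw (t + 1) <= dw t) by (apply dw_antimono; lra).
  assert (0 <= (t - x + 1/2) * (dw t - dw (t + 1))) by (apply Rmult_le_pos; lra).
  destruct (Rle_dec (t - x) (1/2)).
  - assert (k <= dw (t + 1)) by (apply dw_antimono; lra). nra.
  - assert (dw (t + 1) <= k) by (apply dw_antimono; lra). nra.
Qed.

Lemma dw_succ_le_c_last x : 0 < x -> dw (x + 1) <= c_last x.
Proof.
  intros Hx. set (k := dw (x + 1)).
  assert (Hm := probe_le_succ 1 (1/2 - x) (-1) 0 0 0 0 0 0 (- k / 2) (- k * (1/2 - x)) x Hx).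
  lapply Hm; clear Hm; [intros Hm; fold k; conclude_probe x Hm|].
  intros t Ht.
  replace (dprobe 1 (1/2 - x) (-1) 0 0 0 0 0 0 (- k / 2) (- k * (1/2 - x)) t)
    with ((t - x + 1/2) * (dw t - k)).
  2:{ unfold dprobe, dpiece. normalize_shifts t. field. }
  assert (k <= dw t) by (apply dw_antimono; lra).
  apply Rmult_le_pos; lra.
Qed.

(* Trapezoid rule for the concave [w]. *)
Lemma b_gen_nonneg x : 0 < x -> 0 <= b_gen x.
Proof.
  intros Hx. set (k := dw (x + 1/2)).
  assert (Hm := probe_le_succ (-1) (1/2 + x) 1 0 0 0 0 0 0 (k/2) (- k * (2 * x + 1) / 2) x Hx).
  lapply Hm; clear Hm; [intros Hm; conclude_probe x Hm|].
  intros t Ht.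
  replace (dprobe (-1) (1/2 + x) 1 0 0 0 0 0 0 (k/2) (- k * (2 * x + 1) / 2) t)
    with ((1/2 - (t - x)) * (dw t - k)).
  2:{ unfold dprobe, dpiece. normalize_shifts t. field. }
  destruct (Rle_dec (t - x) (1/2)).
  - assert (k <= dw t) by (apply dw_antimono; lra). nra.
  - assert (dw t <= k) by (apply dw_antimono; lra). nra.
Qed.

Lemma b_gen_succ_le x : 0 < x -> b_gen (x + 1) <= b_gen x.
Proof.
  intros Hx. set (k := dw (x + 1/2) - dw (x + 3/2)).
  assert (Hm := probe_le_succ (-1) (1/2 + x) 1 1 (-1/2 - x) (-1) 0 0 0 (k/2) (- k * (2 * x + 1) / 2) x Hx).
  lapply Hm; clear Hm.
  { intros Hm. enough (c_mid x <= a_gen x) by (unfold c_mid in *; lra). conclude_probe x Hm. }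
  intros t Ht.
  replace (dprobe (-1) (1/2 + x) 1 1 (-1/2 - x) (-1) 0 0 0 (k/2) (- k * (2 * x + 1) / 2) t)
    with ((1/2 - (t - x)) * ((1 - al) * (dw_gap t - dw_gap (x + 1/2)))).
  2:{ unfold dprobe, dpiece, k, dw, dw_gap. normalize_shifts t.
      replace (x + 1/2 + 1) with (x + 3/2) by lra. field. }
  destruct (Rle_dec (t - x) (1/2)).
  - assert (dw_gap (x + 1/2) <= dw_gap t) by (apply dw_gap_antimono; lra).
    apply Rmult_le_pos; [lra|]. apply Rmult_le_pos; lra.
  - assert (dw_gap t <= dw_gap (x + 1/2)) by (apply dw_gap_antimono; lra).
    assert (0 <= (t - x - 1/2) * ((1 - al) * (dw_gap (x + 1/2) - dw_gap t))).
    { apply Rmult_le_pos; [lra|]. apply Rmult_le_pos; lra. }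
    nra.
Qed.

(* Concavity of [w]. *)
Lemma a_gen_le_dw x : 0 < x -> a_gen x <= dw x.
Proof.
  intros Hx. set (k := dw x).
  assert (Hm := probe_le_succ 0 (-1) 0 0 0 0 0 0 0 0 k x Hx).
  lapply Hm; clear Hm; [intros Hm; fold k; conclude_probe x Hm|].
  intros t Ht.
  replace (dprobe 0 (-1) 0 0 0 0 0 0 0 0 k t) with (k - dw t).
  2:{ unfold dprobe, dpiece. normalize_shifts t. field. }
  assert (dw t <= k) by (apply dw_antimono; lra). lra.
Qed.

Definition sg := 1 - al / 2.
Definition node (n : nat) := INR n - 1 + sg.

Lemma sg_bounds : 1 / 2 < sg < 1.
Proof. unfold sg; lra. Qed.

Lemma node_pos n : (1 <= n)%nat -> 0 < node n.
Proof. intros H. unfold node, sg. apply le_INR in H. simpl in H. lra. Qed.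

Lemma node_S n : node (S n) = node n + 1.
Proof. unfold node. rewrite S_INR. ring. Qed.

Lemma node_1 : node 1 = sg.
Proof. unfold node. simpl. ring. Qed.

Lemma a_coef_node n : (1 <= n)%nat -> a_coef al sg n = a_gen (node n).
Proof.
  intros H. destruct n; [lia|]. unfold a_coef, a_gen, w, node.
  replace (INR (S n) - 1 + sg + 1) with (INR (S n) + sg) by ring. reflexivity.
Qed.

Lemma b_coef_node n : b_coef al sg n = b_gen (node n).
Proof.
  unfold b_coef, b_gen, W, w, node.
  replace (INR n - 1 + sg + 1) with (INR n + sg) by ring. field. lra.
Qed.

Lemma c_coef_0 k : c_coef al sg 0 k = w sg.
Proof. reflexivity. Qed.

Lemma c_coef_first j : (1 <= j)%nat -> c_coef al sg j 0 = w sg + b_gen sg.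
Proof.
  intros Hj. destruct j; [lia|]. unfold c_coef. simpl Nat.eqb. cbv iota.
  rewrite b_coef_node, node_1. reflexivity.
Qed.

Lemma c_coef_mid j k : (1 <= k < j)%nat -> c_coef al sg j k = c_mid (node k).
Proof.
  intros Hk. unfold c_coef.
  replace (Nat.eqb j 0) with false by (symmetry; apply Nat.eqb_neq; lia).
  replace (Nat.eqb k 0) with false by (symmetry; apply Nat.eqb_neq; lia).
  replace (Nat.ltb k j) with true by (symmetry; apply Nat.ltb_lt; lia).
  rewrite a_coef_node, !b_coef_node by lia.
  replace (k + 1)%nat with (S k) by lia. rewrite node_S. reflexivity.
Qed.

Lemma c_coef_last j : (1 <= j)%nat -> c_coef al sg j j = c_last (node j).
Proof.
  intros Hj. unfold c_coef.
  replace (Nat.eqb j 0) with false by (symmetry; apply Nat.eqb_neq; lia).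
  rewrite Nat.ltb_irrefl. rewrite a_coef_node, b_coef_node by lia. reflexivity.
Qed.

Lemma w_sg_le_c_coef_first j : w sg <= c_coef al sg j 0.
Proof.
  destruct j as [|j]; [rewrite c_coef_0; lra|].
  rewrite c_coef_first by lia.
  assert (0 <= b_gen sg) by (apply b_gen_nonneg; unfold sg; lra). lra.
Qed.

Lemma c_coef_1_le_dw j : (1 <= j)%nat -> c_coef al sg j 1 <= dw sg.
Proof.
  intros Hj. assert (Hsg := sg_bounds).
  assert (Ha : a_gen sg <= dw sg) by (apply a_gen_le_dw; lra).
  destruct (Nat.eq_dec j 1) as [->|Hj1].
  - rewrite c_coef_last, node_1 by lia.
    assert (0 <= b_gen sg) by (apply b_gen_nonneg; lra). unfold c_last. lra.
  - rewrite c_coef_mid, node_1 by lia.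
    assert (b_gen (sg + 1) <= b_gen sg) by (apply b_gen_succ_le; lra). unfold c_mid. lra.
Qed.

Lemma dw_sg_le_w_sg : dw sg <= w sg.
Proof.
  assert (Hsg := sg_bounds). rewrite w_eq by lra. unfold dw.
  apply Rmult_le_compat_r; [left; apply Rpower_pos | unfold sg; lra].
Qed.

Lemma c_coef_nonincr j k : (k < j)%nat -> c_coef al sg j (S k) <= c_coef al sg j k.
Proof.
  intros Hk. destruct k as [|k].
  - assert (H1 := c_coef_1_le_dw j ltac:(lia)).
    assert (H0 := w_sg_le_c_coef_first j). assert (H := dw_sg_le_w_sg). lra.
  - rewrite (c_coef_mid j (S k)) by lia.
    destruct (Nat.eq_dec (S (S k)) j) as [<-|Hne].
    + rewrite c_coef_last by lia. rewrite node_S. apply c_last_succ_le_c_mid, node_pos; lia.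
    + rewrite c_coef_mid by lia. rewrite node_S. apply c_mid_succ_le, node_pos; lia.
Qed.

Lemma c_coef_last_ge j : dw (INR j + sg) <= c_coef al sg j j.
Proof.
  destruct j as [|j].
  - rewrite c_coef_0. simpl INR. rewrite Rplus_0_l. apply dw_sg_le_w_sg.
  - rewrite c_coef_last by lia.
    replace (INR (S j) + sg) with (node (S j) + 1) by (unfold node; ring).
    apply dw_succ_le_c_last, node_pos; lia.
Qed.

Lemma c_coef_sigma_cond j :
  (1 - sg) ^ 2 * c_coef al sg j 0 <= sg ^ 2 * (c_coef al sg j 0 - trunc (c_coef al sg j) j 1).
Proof.
  assert (Hsg := sg_bounds).
  assert (H0 := w_sg_le_c_coef_first j).
  assert (Hw : 0 < w sg) by apply Rpower_pos.
  assert (E : (1 - sg) ^ 2 = sg ^ 2 - (1 - al)) by (unfold sg; field).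
  rewrite E. unfold trunc. destruct (Nat.leb 1 j) eqn:Hj.
  - apply Nat.leb_le in Hj. assert (H1 := c_coef_1_le_dw j Hj).
    assert (Hdw : sg ^ 2 * dw sg <= (1 - al) * w sg).
    { rewrite w_eq by lra. unfold dw. assert (0 < Rpower sg (- al)) by apply Rpower_pos.
      replace ((1 - al) * (sg * Rpower sg (- al))) with (sg * ((1 - al) * Rpower sg (- al))) by ring.
      apply Rmult_le_compat_r; [apply Rmult_le_pos; lra | nra]. }
    nra.
  - nra.
Qed.

End Coefficients.

(** * Bounds on the Gamma function *)

Lemma at_right_0_of (P : R -> Prop) d : 0 < d -> (forall a, 0 < a < d -> P a) -> at_right 0 P.
Proof.
  intros Hd H. exists (mkposreal d Hd). intros y Hy Hpos. apply H. split; auto.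
  change (Rabs (y - 0) < d) in Hy. rewrite Rminus_0_r, Rabs_right in Hy; lra.
Qed.

Lemma lim_ge_of_ev {F : (R -> Prop) -> Prop} {FF : ProperFilter F} (u : R -> R) L c :
  filterlim u F (locally L) -> F (fun x => c <= u x) -> c <= L.
Proof.
  intros Hl Hc. apply (filterlim_le (fun _ => c) u c L Hc); [apply filterlim_const | exact Hl].
Qed.

Lemma lim_le_of_ev {F : (R -> Prop) -> Prop} {FF : ProperFilter F} (u : R -> R) L c :
  filterlim u F (locally L) -> F (fun x => u x <= c) -> L <= c.
Proof.
  intros Hl Hc. apply (filterlim_le u (fun _ => c) L c Hc); [exact Hl | apply filterlim_const].
Qed.

Lemma exp_m1_ge : 1 / 3 <= exp (- 1).
Proof.
  replace (- 1) with (- (1)) by ring. rewrite exp_Ropp. assert (exp 1 <= 3) by apply exp_le_3. assert (0 < exp 1) by apply exp_pos.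
  replace (1 / 3) with (/ 3) by field. apply Rinv_le_contravar; lra.
Qed.

Lemma le_exp_half t : t <= exp (t / 2).
Proof.
  replace (t / 2) with (t / 4 + t / 4) by field. rewrite exp_plus.
  assert (1 + t / 4 <= exp (t / 4)) by apply exp_ineq1_le.
  destruct (Rle_dec (-4) t).
  - assert (0 <= (1 - t / 4) ^ 2) by apply pow2_ge_0.
    assert (t <= (1 + t / 4) * (1 + t / 4)) by nra.
    assert ((1 + t / 4) * (1 + t / 4) <= exp (t / 4) * exp (t / 4))
      by (apply Rmult_le_compat; lra). lra.
  - assert (0 < exp (t / 4)) by apply exp_pos. nra.
Qed.

Section GammaIntegral.

Variable s : R.
Hypothesis Hs : 0 < s <= 2.

Definition gamma_fun t := Rpower t (s - 1) * exp (- t).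

Lemma ex_RInt_gamma_fun a b : 0 < a -> 0 < b -> ex_RInt gamma_fun a b.
Proof.
  intros Ha Hb. apply (@ex_RInt_continuous R_CompleteNormedModule). intros z Hz.
  assert (0 < z) by (apply Rlt_le_trans with (Rmin a b); [apply Rmin_glb_lt|]; lra).
  apply (continuous_mult (fun t => Rpower t (s - 1)) (fun t => exp (- t))).
  - apply continuous_Rpower; auto.
  - apply (@ex_derive_continuous R_AbsRing R_NormedModule). auto_derive. auto.
Qed.

Lemma RInt_gamma_fun_nonneg a b : 0 < a <= b -> 0 <= RInt gamma_fun a b.
Proof.
  intros Hab. apply RInt_ge_0; [lra | apply ex_RInt_gamma_fun; lra |].
  intros t Ht. unfold gamma_fun. apply Rmult_le_pos; left; [apply Rpower_pos | apply exp_pos].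
Qed.

Lemma RInt_gamma_fun_head_le a b : 0 < a <= b -> b <= 1 -> RInt gamma_fun a b <= Rpower b s / s.
Proof.
  intros Hab Hb1.
  apply Rle_trans with (RInt (fun t => Rpower t (s - 1)) a b).
  - apply RInt_le; [lra | apply ex_RInt_gamma_fun; lra | |].
    + apply (@ex_RInt_continuous R_CompleteNormedModule). intros z Hz. apply continuous_Rpower.
      apply Rlt_le_trans with (Rmin a b); [apply Rmin_glb_lt|]; lra.
    + intros x Hx. unfold gamma_fun. assert (0 < Rpower x (s - 1)) by apply Rpower_pos.
      assert (exp (- x) <= 1) by (rewrite <- exp_0; apply exp_le_of_le; lra).
      nra.
  - rewrite RInt_Rpower_pred by lra. assert (0 < Rpower a s) by apply Rpower_pos.
    apply Rmult_le_compat_r; [left; apply Rinv_0_lt_compat; lra | lra].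
Qed.

Lemma RInt_gamma_fun_tail_le a b : 1 <= a <= b -> RInt gamma_fun a b <= 2 * exp (- a / 2).
Proof.
  intros Hab.
  assert (RI : RInt (fun t => exp (- t / 2)) a b = 2 * (exp (- a / 2) - exp (- b / 2))).
  { apply is_RInt_unique.
    replace (2 * (exp (- a / 2) - exp (- b / 2)))
      with (minus (-2 * exp (- b / 2)) (-2 * exp (- a / 2))) by (unfold minus, plus, opp; simpl; ring).
    apply (is_RInt_derive (fun t => -2 * exp (- t / 2))).
    - intros x _. auto_derive; auto. unfold Rdiv. field.
    - intros x _. apply (@ex_derive_continuous R_AbsRing R_NormedModule). auto_derive. auto. }
  apply Rle_trans with (RInt (fun t => exp (- t / 2)) a b).
  - apply RInt_le; [lra | apply ex_RInt_gamma_fun; lra | |].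
    + apply (@ex_RInt_continuous R_CompleteNormedModule). intros z Hz.
      apply (@ex_derive_continuous R_AbsRing R_NormedModule). auto_derive. auto.
    + intros t Ht. unfold gamma_fun.
      (* [t^(s-1) e^(-t) <= t e^(-t) <= e^(t/2) e^(-t)] *)
      assert (H1 : Rpower t (s - 1) <= t).
      { rewrite <- (Rpower_1 t) at 2 by lra. apply Rle_Rpower; lra. }
      assert (H2 := le_exp_half t).
      assert (E : exp (t / 2) * exp (- t) = exp (- t / 2)) by (rewrite <- exp_plus; f_equal; field).
      assert (0 < exp (- t)) by apply exp_pos. assert (0 < Rpower t (s - 1)) by apply Rpower_pos.
      rewrite <- E. apply Rmult_le_compat_r; lra.
  - rewrite RI. assert (0 < exp (- b / 2)) by apply exp_pos. lra.
Qed.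

Definition gamma_head a := RInt gamma_fun a 1.
Definition gamma_tail b := RInt gamma_fun 1 b.

Lemma gamma_head_sub a b : 0 < a -> 0 < b -> gamma_head a - gamma_head b = RInt gamma_fun a b.
Proof.
  intros Ha Hb. unfold gamma_head.
  rewrite <- (RInt_Chasles gamma_fun a b 1) by (apply ex_RInt_gamma_fun; lra).
  unfold plus; simpl. ring.
Qed.

Lemma gamma_tail_sub a b : 0 < a -> 0 < b -> gamma_tail b - gamma_tail a = RInt gamma_fun a b.
Proof.
  intros Ha Hb. unfold gamma_tail.
  rewrite <- (RInt_Chasles gamma_fun 1 a b) by (apply ex_RInt_gamma_fun; lra).
  unfold plus; simpl. ring.
Qed.

Lemma gamma_head_add_tail a b : 0 < a -> 0 < b -> gamma_head a + gamma_tail b = RInt gamma_fun a b.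
Proof.
  intros Ha Hb. unfold gamma_head, gamma_tail.
  rewrite <- (RInt_Chasles gamma_fun a 1 b) by (apply ex_RInt_gamma_fun; lra).
  reflexivity.
Qed.

Lemma gamma_head_cvg : exists L, filterlim gamma_head (at_right 0) (locally L).
Proof.
  set (F := filtermap gamma_head (at_right 0)).
  assert (FF : ProperFilter F) by (apply filtermap_proper_filter, at_right_proper_filter).
  assert (Hc : forall eps : posreal, exists x : R, F (ball x eps)).
  { intros [e He]. set (y := s * e / 2).
    assert (Hy : 0 < y) by (unfold y; nra).
    set (d := Rmin 1 (Rpower y (/ s))).
    assert (Hd : 0 < d) by (apply Rmin_glb_lt; [lra | apply Rpower_pos]).
    assert (Hd1 : d <= 1) by apply Rmin_l.
    assert (Hds : Rpower d s <= y).
    { destruct (Rle_lt_or_eq_dec _ _ (Rmin_r 1 (Rpower y (/ s)))) as [Hl|He'].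
      - left. apply Rpower_lt_of_lt_root; auto; lra.
      - unfold d. rewrite He', Rpower_mult. replace (/ s * s) with 1 by (field; lra).
        rewrite Rpower_1; lra. }
    exists (gamma_head d). apply (at_right_0_of _ d Hd). intros a Ha.
    change (Rabs (gamma_head a - gamma_head d) < e).
    rewrite gamma_head_sub by lra.
    assert (H0 := RInt_gamma_fun_nonneg a d ltac:(lra)).
    assert (H1 := RInt_gamma_fun_head_le a d ltac:(lra) Hd1).
    rewrite Rabs_right by lra.
    assert (Rpower d s / s <= y / s)
      by (apply Rmult_le_compat_r; [left; apply Rinv_0_lt_compat; lra | auto]).
    assert (y / s = e / 2) by (unfold y; field; lra). lra. }
  exists (R_complete_lim F). intros P [eps HP].
  apply (filter_imp (ball (R_complete_lim F) eps)); auto.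
  apply R_complete; auto.
Qed.

Lemma gamma_tail_cvg : exists L, filterlim gamma_tail (Rbar_locally p_infty) (locally L).
Proof.
  set (F := filtermap gamma_tail (Rbar_locally p_infty)).
  assert (FF : ProperFilter F) by (apply filtermap_proper_filter, Rbar_locally_filter).
  assert (Hc : forall eps : posreal, exists x : R, F (ball x eps)).
  { intros [e He]. set (B := Rmax 1 (- 2 * ln (e / 4))).
    assert (HB : 1 <= B) by apply Rmax_l.
    assert (HeB : 2 * exp (- B / 2) < e).
    { assert (- 2 * ln (e / 4) <= B) by apply Rmax_r.
      assert (exp (- B / 2) <= exp (ln (e / 4))) by (apply exp_le_of_le; lra).
      rewrite exp_ln in * by lra. lra. }
    exists (gamma_tail B). exists B. intros b Hb.
    change (Rabs (gamma_tail b - gamma_tail B) < e).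
    rewrite gamma_tail_sub by lra.
    assert (H0 := RInt_gamma_fun_nonneg B b ltac:(lra)).
    assert (H1 := RInt_gamma_fun_tail_le B b ltac:(lra)).
    rewrite Rabs_right by lra. lra. }
  exists (R_complete_lim F). intros P [eps HP].
  apply (filter_imp (ball (R_complete_lim F) eps)); auto.
  apply R_complete; auto.
Qed.

Lemma Gamma_head_tail L1 L2 :
  filterlim gamma_head (at_right 0) (locally L1) ->
  filterlim gamma_tail (Rbar_locally p_infty) (locally L2) -> Gamma s = L1 + L2.
Proof.
  intros H1 H2. unfold Gamma.
  apply (@is_RInt_gen_unique R_CompleteNormedModule (at_right 0) (Rbar_locally p_infty)
    (Proper_StrongProper _ (at_right_proper_filter 0))
    (Proper_StrongProper _ (Rbar_locally_filter p_infty)) gamma_fun).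
  apply (is_RInt_gen_Chasles gamma_fun 1 L1 L2).
  - intros P HP. apply (Filter_prod _ _ _ (fun a => (0 < a < 1) /\ P (gamma_head a)) (fun b => b = 1)).
    + apply filter_and; [apply (at_right_0_of _ 1); [lra | auto] | apply H1; auto].
    + reflexivity.
    + intros a b [Ha HPa] ->. exists (gamma_head a). split; auto.
      apply (@RInt_correct R_CompleteNormedModule). apply ex_RInt_gamma_fun; simpl; lra.
  - intros P HP. apply (Filter_prod _ _ _ (fun a => a = 1) (fun b => 1 < b /\ P (gamma_tail b))).
    + reflexivity.
    + apply filter_and; [exists 1; auto | apply H2; auto].
    + intros a b -> [Hb HPb]. exists (gamma_tail b). split; auto.
      apply (@RInt_correct R_CompleteNormedModule), ex_RInt_gamma_fun; simpl; lra.
Qed.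

Lemma Gamma_ge_of_head c d : 0 < d ->
  (forall a, 0 < a < d -> c <= gamma_head a) -> c <= Gamma s.
Proof.
  intros Hd Hc.
  destruct gamma_head_cvg as [L1 H1]. destruct gamma_tail_cvg as [L2 H2].
  rewrite (Gamma_head_tail L1 L2 H1 H2).
  assert (c <= L1) by (apply (lim_ge_of_ev gamma_head L1 c H1), (at_right_0_of _ d Hd), Hc).
  assert (0 <= L2).
  { apply (lim_ge_of_ev gamma_tail L2 0 H2). exists 1. intros b Hb.
    apply RInt_gamma_fun_nonneg; lra. }
  lra.
Qed.

Lemma Gamma_le_of_bound c :
  (forall a b, 0 < a < 1 -> 1 < b -> RInt gamma_fun a b <= c) -> Gamma s <= c.
Proof.
  intros Hc.
  destruct gamma_head_cvg as [L1 H1]. destruct gamma_tail_cvg as [L2 H2].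
  rewrite (Gamma_head_tail L1 L2 H1 H2).
  assert (Htail : forall b, 1 < b -> L1 <= c - gamma_tail b).
  { intros b Hb. apply (lim_le_of_ev gamma_head L1 _ H1), (at_right_0_of _ 1); [lra|].
    intros a Ha. specialize (Hc a b Ha Hb). rewrite <- gamma_head_add_tail in Hc by lra. lra. }
  assert (L2 <= c - L1).
  { apply (lim_le_of_ev gamma_tail L2 _ H2). exists 1. intros b Hb. specialize (Htail b Hb). lra. }
  lra.
Qed.

Lemma Gamma_pos : 0 < Gamma s.
Proof.
  apply Rlt_le_trans with (1 / 12); [lra|].
  apply (Gamma_ge_of_head _ (1 / 2)); [lra|]. intros a Ha. unfold gamma_head.
  rewrite <- (RInt_Chasles gamma_fun a (1 / 2) 1) by (apply ex_RInt_gamma_fun; lra).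
  assert (H0 := RInt_gamma_fun_nonneg a (1 / 2) ltac:(lra)).
  (* [gamma_fun >= t e^(-1) >= 1/6] on [[1/2, 1]] *)
  assert (1 / 12 <= RInt gamma_fun (1 / 2) 1).
  { apply Rle_trans with (RInt (fun _ => 1 / 6) (1 / 2) 1).
    - rewrite RInt_const. unfold scal; simpl; unfold mult; simpl. lra.
    - apply RInt_le; [lra | | apply ex_RInt_gamma_fun; lra |].
      + apply (@ex_RInt_continuous R_CompleteNormedModule). intros; apply continuous_const.
      + intros t Ht. unfold gamma_fun.
        assert (t <= Rpower t (s - 1)).
        { rewrite <- (Rpower_1 t) at 1 by lra. apply Rpower_ge_of_base_le_1; lra. }
        assert (exp (- 1) <= exp (- t)) by (apply exp_le_of_le; lra).
        assert (H3 := exp_m1_ge). nra. }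
  unfold plus; simpl. lra.
Qed.

End GammaIntegral.

(* Weighted AM-GM [t^(1-al) 1^al <= (1-al) t + al], from [ln y <= y - 1]. *)
Lemma Rpower_le_tangent al t : 0 < al < 1 -> 0 < t -> Rpower t (1 - al) <= al + (1 - al) * t.
Proof.
  intros Hal Ht. set (m := al + (1 - al) * t).
  assert (Hm : 0 < m) by (unfold m; nra).
  assert (ln_le : forall y, 0 < y -> ln y <= y - 1).
  { intros y Hy. generalize (exp_ineq1_le (ln y)). rewrite exp_ln by auto. lra. }
  assert (H1 := ln_le (t / m) ltac:(apply Rdiv_lt_0_compat; auto)).
  assert (H2 := ln_le (/ m) ltac:(apply Rinv_0_lt_compat; auto)).
  rewrite ln_div in H1 by auto. rewrite ln_Rinv in H2 by auto.
  assert (E : (1 - al) * (t / m - 1) + al * (/ m - 1) = 0) by (unfold m in *; field; lra).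
  assert ((1 - al) * (ln t - ln m) <= (1 - al) * (t / m - 1)) by (apply Rmult_le_compat_l; lra).
  assert (al * - ln m <= al * (/ m - 1)) by (apply Rmult_le_compat_l; lra).
  unfold Rpower. rewrite <- (exp_ln m) by auto. apply exp_le_of_le. lra.
Qed.

Lemma Gamma_2_sub_le_1 al : 0 < al < 1 -> Gamma (2 - al) <= 1.
Proof.
  intros Hal. apply (Gamma_le_of_bound (2 - al)); [lra|]. intros a b Ha Hb.
  (* a primitive of the majorant [(al + (1 - al) t) e^(-t)] *)
  set (G := fun t => - (al + (1 - al) * (t + 1)) * exp (- t)).
  assert (RIG : RInt (fun t => (al + (1 - al) * t) * exp (- t)) a b = G b - G a).
  { apply is_RInt_unique.
    replace (G b - G a) with (minus (G b) (G a)) by (unfold minus, plus, opp; simpl; ring).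
    apply (is_RInt_derive G).
    - intros x _. unfold G. auto_derive; auto. ring.
    - intros x _. apply (@ex_derive_continuous R_AbsRing R_NormedModule). auto_derive. auto. }
  assert (Hle : RInt (gamma_fun (2 - al)) a b <= G b - G a).
  { rewrite <- RIG. apply RInt_le; [lra | apply ex_RInt_gamma_fun; lra | |].
    - apply (@ex_RInt_continuous R_CompleteNormedModule). intros z _.
      apply (@ex_derive_continuous R_AbsRing R_NormedModule). auto_derive. auto.
    - intros x Hx. unfold gamma_fun. replace (2 - al - 1) with (1 - al) by ring.
      apply Rmult_le_compat_r; [left; apply exp_pos|]. apply Rpower_le_tangent; lra. }
  assert (HGb : G b <= 0).
  { unfold G. assert (0 < exp (- b)) by apply exp_pos.
    assert (0 <= (al + (1 - al) * (b + 1)) * exp (- b)) by (apply Rmult_le_pos; nra). lra. }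
  assert (HGa : - G a <= 1).
  { unfold G. assert (1 + a <= exp a) by apply exp_ineq1_le.
    assert (E : exp a * exp (- a) = 1) by (rewrite <- exp_plus, Rplus_opp_r; apply exp_0).
    assert (0 < exp (- a)) by apply exp_pos.
    assert ((al + (1 - al) * (a + 1)) * exp (- a) <= (1 + a) * exp (- a))
      by (apply Rmult_le_compat_r; nra).
    assert ((1 + a) * exp (- a) <= exp a * exp (- a)) by (apply Rmult_le_compat_r; lra).
    lra. }
  lra.
Qed.

Lemma RInt_Rpower_sub al a b : 0 < al < 1 -> 0 < a -> 0 < b ->
  RInt (fun t => Rpower t (- al) - Rpower t (1 - al)) a b =
  (Rpower b (1 - al) - Rpower a (1 - al)) / (1 - al) - (Rpower b (2 - al) - Rpower a (2 - al)) / (2 - al).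
Proof.
  intros Hal Ha Hb.
  assert (ex : forall r, ex_RInt (fun t => Rpower t r) a b).
  { intros r. apply (@ex_RInt_continuous R_CompleteNormedModule). intros z Hz. apply continuous_Rpower.
    apply Rlt_le_trans with (Rmin a b); [apply Rmin_glb_lt|]; lra. }
  rewrite (RInt_minus (fun t => Rpower t (- al)) (fun t => Rpower t (1 - al))) by apply ex.
  assert (H1 : RInt (fun t => Rpower t (- al)) a b = (Rpower b (1 - al) - Rpower a (1 - al)) / (1 - al)).
  { replace (- al) with (1 - al - 1) by ring. apply RInt_Rpower_pred; lra. }
  assert (H2 : RInt (fun t => Rpower t (1 - al)) a b = (Rpower b (2 - al) - Rpower a (2 - al)) / (2 - al)).
  { replace (1 - al) with (2 - al - 1) by ring. apply RInt_Rpower_pred; lra. }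
  rewrite H1, H2. reflexivity.
Qed.

Lemma Gamma_1_sub_ge al : 0 < al < 1 -> 1 / (2 * (1 - al)) <= Gamma (1 - al).
Proof.
  intros Hal. set (y := al / (2 * (2 - al))).
  assert (Hy : 0 < y) by (unfold y; apply Rdiv_lt_0_compat; lra).
  apply (Gamma_ge_of_head (1 - al) ltac:(lra) _ (Rmin 1 (Rpower y (/ (1 - al))))).
  { apply Rmin_glb_lt; [lra | apply Rpower_pos]. }
  intros a Ha.
  assert (Ha1 : a < 1) by (apply Rlt_le_trans with (Rmin 1 (Rpower y (/ (1 - al)))); [lra | apply Rmin_l]).
  assert (Hay : Rpower a (1 - al) < y).
  { apply Rpower_lt_of_lt_root; [lra | auto |]. split; [lra|].
    apply Rlt_le_trans with (Rmin 1 (Rpower y (/ (1 - al)))); [lra | apply Rmin_r]. }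
  (* [gamma_fun >= t^(-al) (1 - t)] from [e^(-t) >= 1 - t] *)
  assert (Hlow : RInt (fun t => Rpower t (- al) - Rpower t (1 - al)) a 1 <= gamma_head (1 - al) a).
  { apply RInt_le; [lra | | apply ex_RInt_gamma_fun; lra |].
    - apply (@ex_RInt_continuous R_CompleteNormedModule). intros z Hz.
      assert (0 < z) by (apply Rlt_le_trans with (Rmin a 1); [apply Rmin_glb_lt|]; lra).
      apply (continuous_minus (fun t => Rpower t (- al)) (fun t => Rpower t (1 - al)));
        apply continuous_Rpower; auto.
    - intros x Hx. unfold gamma_fun. replace (1 - al - 1) with (- al) by ring.
      assert (Ew := w_eq al x ltac:(lra)). unfold w in Ew. rewrite Ew.
      assert (1 - x <= exp (- x)) by (replace (1 - x) with (1 + - x) by ring; apply exp_ineq1_le).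
      assert (0 < Rpower x (- al)) by apply Rpower_pos. nra. }
  rewrite RInt_Rpower_sub, !Rpower_1_l in Hlow by lra.
  assert (0 < Rpower a (2 - al)) by apply Rpower_pos.
  assert (Rpower a (1 - al) / (1 - al) <= y / (1 - al))
    by (apply Rmult_le_compat_r; [left; apply Rinv_0_lt_compat; lra | lra]).
  assert (E : 1 / (1 - al) - 1 / (2 - al) - y / (1 - al) = 1 / (2 * (1 - al))) by (unfold y; field; lra).
  assert (0 <= Rpower a (2 - al) / (2 - al)) by (apply Rdiv_le_0_compat; lra).
  unfold Rdiv in *. lra.
Qed.

(** * The spatial operator *)

Lemma young_le k x y : 0 < k -> x * y <= k * x ^ 2 + y ^ 2 / (4 * k).
Proof.
  intros Hk.
  assert (E : k * x ^ 2 + y ^ 2 / (4 * k) - x * y = (2 * k * x - y) ^ 2 / (4 * k)) by (field; lra).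
  assert (0 <= (2 * k * x - y) ^ 2 / (4 * k)) by (apply Rdiv_le_0_compat; [apply pow2_ge_0 | lra]).
  lra.
Qed.

Section Poincare.

Variable v : nat -> R.
Let D k := (v (S k) - v k) ^ 2.

Lemma D_nonneg k : 0 <= D k.
Proof. apply pow2_ge_0. Qed.

Lemma sq_incr_le_cauchy_schwarz m p :
  (v (m + p)%nat - v m) ^ 2 <= INR p * sum_lt p (fun k => D (m + k)%nat).
Proof.
  induction p as [|p IH].
  - rewrite Nat.add_0_r. simpl. lra.
  - rewrite Nat.add_succ_r. simpl sum_lt. rewrite S_INR.
    set (A := v (m + p)%nat - v m) in *. set (dl := v (S (m + p)) - v (m + p)%nat).
    set (Sp := sum_lt p (fun k => D (m + k)%nat)) in *.
    replace (v (S (m + p)) - v m) with (A + dl) by (unfold A, dl; ring).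
    change (D (m + p)%nat) with (dl ^ 2).
    assert (HS : 0 <= Sp) by (apply sum_lt_nonneg; intros; apply D_nonneg).
    assert (Hp : 0 <= INR p) by apply pos_INR.
    assert (0 <= (INR p * dl - A) ^ 2) by apply pow2_ge_0.
    destruct (Req_dec (INR p) 0) as [Hp0|Hp0].
    + rewrite Hp0 in IH. assert (A = 0) by nra. subst A. rewrite Hp0. nra.
    + assert (INR p * ((INR p + 1) * (Sp + dl ^ 2) - (A + dl) ^ 2) >= 0) by nra.
      nra.
Qed.

Lemma pointwise_poincare N i : v 0%nat = 0 -> v N = 0 -> (i <= N)%nat ->
  INR N * v i ^ 2 <= INR N ^ 2 / 4 * sum_lt N D.
Proof.
  intros H0 HN Hi.
  assert (C1 := sq_incr_le_cauchy_schwarz 0 i).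
  assert (C2 := sq_incr_le_cauchy_schwarz i (N - i)).
  rewrite Nat.add_0_l, H0, Rminus_0_r in C1.
  replace (i + (N - i))%nat with N in C2 by lia.
  rewrite HN, minus_INR in C2 by lia.
  assert (Hsplit := sum_lt_add i (N - i) D). replace (i + (N - i))%nat with N in Hsplit by lia.
  change (sum_lt i (fun k => D (0 + k)%nat)) with (sum_lt i D) in C1.
  set (S1 := sum_lt i D) in *. set (S2 := sum_lt (N - i) (fun k => D (i + k)%nat)) in *.
  assert (0 <= S1) by (apply sum_lt_nonneg; intros; apply D_nonneg).
  assert (0 <= S2) by (apply sum_lt_nonneg; intros; apply D_nonneg).
  assert (Hi0 : 0 <= INR i) by apply pos_INR.
  assert (HiN : INR i <= INR N) by (apply le_INR; lia).
  replace ((0 - v i) ^ 2) with (v i ^ 2) in C2 by ring.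
  assert ((INR N - INR i) * v i ^ 2 <= (INR N - INR i) * (INR i * S1)) by (apply Rmult_le_compat_l; lra).
  assert (INR i * v i ^ 2 <= INR i * ((INR N - INR i) * S2)) by (apply Rmult_le_compat_l; lra).
  assert (0 <= (INR N / 2 - INR i) ^ 2) by apply pow2_ge_0.
  (* [i (N - i) <= N^2 / 4] *)
  rewrite Hsplit. nra.
Qed.

Lemma discrete_poincare n : v 0%nat = 0 -> v (S n) = 0 ->
  sum_lt n (fun k => v (S k) ^ 2) <= INR (S n) ^ 2 / 4 * sum_lt (S n) D.
Proof.
  intros H0 HN.
  assert (HN0 : 0 < INR (S n)) by (apply lt_0_INR; lia).
  assert (HD : 0 <= sum_lt (S n) D) by (apply sum_lt_nonneg; intros; apply D_nonneg).
  apply Rle_trans with (sum_lt n (fun _ => INR (S n) / 4 * sum_lt (S n) D)).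
  - apply sum_lt_le; intros k Hk.
    apply Rmult_le_reg_l with (INR (S n)); [lra|].
    replace (INR (S n) * (INR (S n) / 4 * sum_lt (S n) D)) with (INR (S n) ^ 2 / 4 * sum_lt (S n) D)
      by field.
    apply pointwise_poincare; auto; lia.
  - rewrite sum_lt_const.
    assert (INR n <= INR (S n)) by (apply le_INR; lia). assert (0 <= INR n) by apply pos_INR.
    replace (INR (S n) ^ 2 / 4 * sum_lt (S n) D) with (INR (S n) * (INR (S n) / 4 * sum_lt (S n) D))
      by field.
    apply Rmult_le_compat_r; [|lra]. apply Rmult_le_pos; lra.
Qed.

End Poincare.

Definition spatial_op (h : R) (a dd v : nat -> R) (i : nat) : R :=
  (a (S i) * v (S i) - (a (S i) + a i) * v i + a i * v (i - 1)%nat) / (h * h) - dd i * v i.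

Section SpatialEnergy.

Variables (n : nat) (h c1 : R) (a dd v : nat -> R).
Hypothesis Hh : 0 < h.
Hypothesis Hc1 : 0 < c1.
Hypothesis Ha : forall i, (1 <= i <= S n)%nat -> c1 <= a i.
Hypothesis Hdd : forall i, (1 <= i <= n)%nat -> 0 <= dd i.
Hypothesis Hv0 : v 0%nat = 0.
Hypothesis HvN : v (S n) = 0.

Let SD := sum_lt (S n) (fun k => (v (S k) - v k) ^ 2).

Lemma spatial_op_dissipative :
  sum_lt n (fun k => h * v (S k) * spatial_op h a dd v (S k)) <= - (c1 / h) * SD.
Proof.
  set (flux := fun i => a i * (v i - v (Nat.pred i))).
  apply Rle_trans with (/ h * sum_lt n (fun k => v (S k) * (flux (S (S k)) - flux (S k)))).
  - rewrite <- sum_lt_scal. apply sum_lt_le; intros k Hk.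
    assert (0 <= dd (S k)) by (apply Hdd; lia).
    assert (0 <= h * dd (S k) * v (S k) ^ 2) by (apply Rmult_le_pos; [nra | apply pow2_ge_0]).
    replace (h * v (S k) * spatial_op h a dd v (S k)) with
      (/ h * (v (S k) * (flux (S (S k)) - flux (S k))) - h * dd (S k) * v (S k) ^ 2).
    2:{ unfold spatial_op, flux; simpl Nat.pred. replace (S k - 1)%nat with k by lia. field; lra. }
    lra.
  - rewrite sum_lt_by_parts.
    replace (v n * flux (S n) - v 0%nat * flux 1%nat
             - sum_lt n (fun k => (v (S k) - v k) * flux (S k)))
      with (- sum_lt (S n) (fun k => a (S k) * (v (S k) - v k) ^ 2)).
    2:{ change (sum_lt (S n) ?F) with (sum_lt n F + F n). cbv beta.
        unfold flux. simpl Nat.pred. rewrite HvN, Hv0.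
        rewrite (sum_lt_ext n (fun k => (v (S k) - v k) * (a (S k) * (v (S k) - v k)))
                   (fun k => a (S k) * (v (S k) - v k) ^ 2)) by (intros; ring).
        ring. }
    assert (c1 * SD <= sum_lt (S n) (fun k => a (S k) * (v (S k) - v k) ^ 2)).
    { unfold SD. rewrite <- sum_lt_scal. apply sum_lt_le; intros k Hk.
      apply Rmult_le_compat_r; [apply pow2_ge_0 | apply Ha; lia]. }
    assert (0 < / h) by (apply Rinv_0_lt_compat; lra).
    unfold Rdiv. nra.
Qed.

(* Young's inequality, with the weight matched to the Poincare constant. *)
Lemma source_term_le (phi : nat -> R) :
  sum_lt n (fun k => h * v (S k) * phi (S k))
  <= c1 / h * SD + (INR (S n) * h) ^ 2 / (16 * c1) * sum_lt n (fun k => phi (S k) * phi (S k) * h).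
Proof.
  set (NN := INR (S n)).
  assert (HNN : 0 < NN) by (apply lt_0_INR; lia).
  assert (HNh : 0 < (NN * h) ^ 2 / 4)
    by (apply Rdiv_lt_0_compat; [apply pow_lt, Rmult_lt_0_compat |]; lra).
  set (kap := c1 / ((NN * h) ^ 2 / 4)).
  assert (Hkap : 0 < kap) by (unfold kap; apply Rdiv_lt_0_compat; lra).
  apply Rle_trans with (kap * h * sum_lt n (fun k => v (S k) ^ 2)
                        + (NN * h) ^ 2 / (16 * c1) * sum_lt n (fun k => phi (S k) * phi (S k) * h)).
  - rewrite <- !sum_lt_scal, <- sum_lt_plus. apply sum_lt_le; intros k _.
    assert (HY := young_le kap (v (S k)) (phi (S k)) Hkap).
    replace ((NN * h) ^ 2 / (16 * c1)) with (/ (4 * kap)) by (unfold kap; field; lra).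
    replace (h * v (S k) * phi (S k)) with (h * (v (S k) * phi (S k))) by ring.
    replace (kap * h * v (S k) ^ 2 + / (4 * kap) * (phi (S k) * phi (S k) * h))
      with (h * (kap * v (S k) ^ 2 + phi (S k) ^ 2 / (4 * kap))) by (field; lra).
    apply Rmult_le_compat_l; lra.
  - apply Rplus_le_compat_r.
    replace (c1 / h * SD) with (kap * h * (NN ^ 2 / 4 * SD)) by (unfold kap; field; lra).
    apply Rmult_le_compat_l; [nra|]. apply discrete_poincare; auto.
Qed.

Lemma spatial_energy_le (phi : nat -> R) :
  sum_lt n (fun k => h * v (S k) * (spatial_op h a dd v (S k) + phi (S k)))
  <= (INR (S n) * h) ^ 2 / (16 * c1) * sum_lt n (fun k => phi (S k) * phi (S k) * h).
Proof.
  rewrite (sum_lt_ext n _ (fun k => h * v (S k) * spatial_op h a dd v (S k) + h * v (S k) * phi (S k)))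
    by (intros; ring).
  rewrite sum_lt_plus.
  assert (H1 := spatial_op_dissipative). assert (H2 := source_term_le phi). lra.
Qed.

End SpatialEnergy.

(** * Stability of the scheme *)

Lemma maxR_ge M (g : nat -> R) j : (1 <= j <= M)%nat -> g j <= maxR M g.
Proof.
  intros H. unfold maxR. assert (Hin : In j (seq 1 M)) by (apply in_seq; lia).
  induction (seq 1 M) as [|x s IH]; [destruct Hin|].
  simpl. destruct Hin as [->|Hin]; [apply Rmax_l|].
  apply Rle_trans with (fold_right Rmax 0 (map g s)); [auto | apply Rmax_r].
Qed.

Lemma maxR_nonneg M (g : nat -> R) : 0 <= maxR M g.
Proof.
  unfold maxR. induction (seq 1 M) as [|x s IH]; simpl; [lra|].
  apply Rle_trans with (fold_right Rmax 0 (map g s)); [auto | apply Rmax_r].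
Qed.

Lemma norm0sq_eq N h v : norm0sq N h v = sum_lt (N - 1) (fun k => v (S k) * v (S k) * h).
Proof. apply sumR_1. Qed.

Lemma diff_conv_ext C j g g' : (forall r, g r = g' r) -> diff_conv C j g = diff_conv C j g'.
Proof. intros H. unfold diff_conv. apply sum_eq; intros r _. rewrite !H. reflexivity. Qed.

Lemma diff_conv_sum_lt C j n (G : nat -> nat -> R) :
  diff_conv C j (fun r => sum_lt n (G r)) = sum_lt n (fun k => diff_conv C j (fun r => G r k)).
Proof.
  unfold diff_conv. rewrite sum_lt_sum_f_R0_comm. apply sum_eq; intros r _.
  rewrite <- sum_lt_minus, <- sum_lt_scal. reflexivity.
Qed.

Lemma frac_deriv_diff_conv alpha sigma tau y j i :
  frac_deriv alpha sigma tau y j i =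
  Rpower tau (1 - alpha) / Gamma (2 - alpha) / tau * diff_conv (c_coef alpha sigma j) j (fun r => y r i).
Proof.
  unfold frac_deriv, diff_conv.
  replace (Rpower tau (1 - alpha) / Gamma (2 - alpha) / tau) with
    (Rpower tau (1 - alpha) / Gamma (2 - alpha) * / tau) by reflexivity.
  rewrite Rmult_assoc. f_equal. rewrite scal_sum. apply sum_eq; intros; unfold Rdiv; ring.
Qed.

Lemma level_energy_le (C : nat -> R) (j n : nat) (K h s : R) (y : nat -> nat -> R) (rhs : nat -> R) :
  0 < K -> 0 < h ->
  (forall k, (k < j)%nat -> C (S k) <= C k) -> 0 <= C j ->
  (1 - s) ^ 2 * C 0%nat <= s ^ 2 * (C 0%nat - trunc C j 1) ->
  (forall i, (1 <= i <= n)%nat -> K * diff_conv C j (fun r => y r i) = rhs i) ->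
  K / 2 * diff_conv C j (fun r => sum_lt n (fun k => y r (S k) * y r (S k) * h))
  <= sum_lt n (fun k => h * (s * y (S j) (S k) + (1 - s) * y j (S k)) * rhs (S k)).
Proof.
  intros HK Hh Hmon Hlast Hs Hrhs.
  rewrite diff_conv_sum_lt, <- sum_lt_scal. apply sum_lt_le; intros k Hk.
  rewrite <- (Hrhs (S k)) by lia.
  rewrite (diff_conv_ext C j _ (fun r => h * (y r (S k) * y r (S k)))) by (intros; ring).
  replace (diff_conv C j (fun r => h * (y r (S k) * y r (S k))))
    with (h * diff_conv C j (fun r => y r (S k) * y r (S k))).
  2:{ unfold diff_conv. rewrite scal_sum. apply sum_eq; intros; ring. }
  assert (H := diff_conv_sq_le C j Hmon Hlast s (fun r => y r (S k)) Hs).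
  assert (0 < K * h) by (apply Rmult_lt_0_compat; lra).
  replace (K / 2 * (h * diff_conv C j (fun r => y r (S k) * y r (S k))))
    with (K * h * (/ 2 * diff_conv C j (fun r => y r (S k) * y r (S k)))) by (unfold Rdiv; ring).
  replace (h * (s * y (S j) (S k) + (1 - s) * y j (S k)) * (K * diff_conv C j (fun r => y r (S k))))
    with (K * h * ((s * y (S j) (S k) + (1 - s) * y j (S k)) * diff_conv C j (fun r => y r (S k))))
    by ring.
  apply Rmult_le_compat_l; lra.
Qed.

Lemma c_coef_last_nonneg al j : 0 < al < 1 -> 0 <= c_coef al (sg al) j j.
Proof.
  intros Hal. eapply Rle_trans; [|apply c_coef_last_ge; auto].
  unfold dw. apply Rmult_le_pos; [lra | left; apply Rpower_pos].
Qed.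

Lemma l1_scale_pos alpha tau : 0 < alpha < 1 -> 0 < tau ->
  0 < Rpower tau (1 - alpha) / Gamma (2 - alpha) / tau.
Proof.
  intros Hal Htau. assert (0 < Gamma (2 - alpha)) by (apply Gamma_pos; lra).
  assert (0 < Rpower tau (1 - alpha)) by apply Rpower_pos.
  repeat apply Rdiv_lt_0_compat; lra.
Qed.

Lemma scheme_level_le (alpha c1 h tau : R) (N j : nat) (a d phi : nat -> R) (y : nat -> nat -> R) :
  0 < alpha < 1 -> 0 < c1 -> 0 < h -> 0 < tau -> (1 <= N)%nat ->
  (forall i, (1 <= i <= N)%nat -> c1 <= a i) ->
  (forall i, (1 <= i <= N - 1)%nat -> 0 <= d i) ->
  y j 0%nat = 0 -> y j N = 0 -> y (S j) 0%nat = 0 -> y (S j) N = 0 ->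
  let sigma := 1 - alpha / 2 in
  let ysig := fun i => sigma * y (S j) i + (1 - sigma) * y j i in
  (forall i, (1 <= i <= N - 1)%nat ->
     frac_deriv alpha sigma tau y j i = spatial_op h a d ysig i + phi i) ->
  diff_conv (c_coef alpha sigma j) j (fun r => norm0sq N h (y r))
  <= (INR N * h) ^ 2 / (16 * c1) * norm0sq N h phi
     / (Rpower tau (1 - alpha) / Gamma (2 - alpha) / tau / 2).
Proof.
  intros Hal Hc1 Hh Htau HN Ha Hd Hy0 HyN Hy0' HyN' sigma ysig Hsch.
  destruct N as [|n]; [lia|]. simpl in Hd, Hsch. rewrite Nat.sub_0_r in Hd, Hsch.
  set (K := Rpower tau (1 - alpha) / Gamma (2 - alpha) / tau).
  assert (HK : 0 < K) by (apply l1_scale_pos; auto).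
  apply Rmult_le_reg_l with (K / 2); [lra|].
  replace (K / 2 * ((INR (S n) * h) ^ 2 / (16 * c1) * norm0sq (S n) h phi / (K / 2)))
    with ((INR (S n) * h) ^ 2 / (16 * c1) * norm0sq (S n) h phi) by (field; lra).
  rewrite (diff_conv_ext _ _ _ (fun r => sum_lt n (fun k => y r (S k) * y r (S k) * h)))
    by (intros; rewrite norm0sq_eq; simpl; rewrite Nat.sub_0_r; reflexivity).
  rewrite norm0sq_eq. simpl (S n - 1)%nat. rewrite Nat.sub_0_r.
  eapply Rle_trans.
  - apply (level_energy_le _ j n K h sigma y (fun i => spatial_op h a d ysig i + phi i)); auto.
    + apply c_coef_nonincr; auto.
    + apply c_coef_last_nonneg; auto.
    + apply c_coef_sigma_cond; auto.
    + intros i Hi. unfold K. rewrite <- frac_deriv_diff_conv. apply Hsch; auto.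
  - apply (spatial_energy_le n h c1 a d ysig); auto.
    + unfold ysig. rewrite Hy0, Hy0'. ring.
    + unfold ysig. rewrite HyN, HyN'. ring.
Qed.

Lemma INR_le_pred j M : (1 <= M)%nat -> (j <= M - 1)%nat -> INR j <= INR M - 1.
Proof.
  intros HM Hj. replace (INR M - 1) with (INR (M - 1)) by (rewrite minus_INR by lia; reflexivity).
  apply le_INR; lia.
Qed.

Lemma c_coef_stability al (M : nat) (g : nat -> R) (B : R) :
  0 < al < 1 -> (1 <= M)%nat -> 0 <= B ->
  (forall j, (j <= M - 1)%nat -> diff_conv (c_coef al (sg al) j) j g <= B) ->
  forall j, (j <= M - 1)%nat -> g (S j) <= g 0%nat + B / dw al (INR M).
Proof.
  intros Hal HM HB Hlevel. apply (diff_conv_stability (c_coef al (sg al))); auto.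
  - unfold dw. apply Rmult_lt_0_compat; [lra | apply Rpower_pos].
  - intros; apply c_coef_nonincr; auto.
  - intros j Hj. eapply Rle_trans; [|apply c_coef_last_ge; auto].
    apply dw_antimono; auto. assert (0 <= INR j) by apply pos_INR.
    assert (INR j <= INR M - 1) by (apply INR_le_pred; lia). unfold sg. lra.
Qed.

Lemma rect_grid_point l T (N M : nat) (x s : R) :
  0 < l -> 0 < T -> (1 <= N)%nat -> (1 <= M)%nat -> 0 <= x <= INR N -> 0 <= s <= INR M ->
  rect l T (x * (l / INR N), s * (T / INR M)).
Proof.
  intros Hl HT HN HM Hx Hs.
  assert (range : forall (L : R) (n : nat) (x : R),
    0 < L -> (1 <= n)%nat -> 0 <= x <= INR n -> 0 <= x * (L / INR n) <= L).
  { intros L n z HL Hn Hz. assert (0 < INR n) by (apply lt_0_INR; lia).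
    assert (0 < L / INR n) by (apply Rdiv_lt_0_compat; lra).
    assert (z * (L / INR n) <= INR n * (L / INR n)) by (apply Rmult_le_compat_r; lra).
    replace (INR n * (L / INR n)) with L in * by (field; lra).
    split; [apply Rmult_le_pos |]; lra. }
  split; apply range; auto.
Qed.

Lemma stability_constant_le alpha l T c1 (M : nat) F :
  0 < alpha < 1 -> 0 < T -> (1 <= M)%nat -> 0 < c1 -> 0 <= F ->
  l ^ 2 / (16 * c1) * F / (Rpower (T / INR M) (1 - alpha) / Gamma (2 - alpha) / (T / INR M) / 2)
    / dw alpha (INR M)
  <= l ^ 2 * Rpower T alpha * Gamma (1 - alpha) / (4 * c1) * F.
Proof.
  intros Hal HT HM Hc1 HF.
  assert (HMp : 0 < INR M) by (apply lt_0_INR; lia).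
  set (tau := T / INR M). assert (Htau : 0 < tau) by (unfold tau; apply Rdiv_lt_0_compat; lra).
  assert (HG2 : 0 < Gamma (2 - alpha)) by (apply Gamma_pos; lra).
  assert (HG2le := Gamma_2_sub_le_1 alpha Hal).
  assert (HG1 := Gamma_1_sub_ge alpha Hal).
  assert (HRT : 0 < Rpower T alpha) by apply Rpower_pos.
  assert (Eprod : Rpower tau (1 - alpha) / tau * Rpower (INR M) (- alpha) = / Rpower T alpha).
  { assert (Ew := w_eq alpha tau Htau). unfold w in Ew. rewrite Ew.
    replace (tau * Rpower tau (- alpha) / tau * Rpower (INR M) (- alpha))
      with (Rpower tau (- alpha) * Rpower (INR M) (- alpha)) by (field; lra).
    rewrite Rpower_mult_distr by lra. replace (tau * INR M) with T by (unfold tau; field; lra).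
    apply Rpower_Ropp. }
  replace (l ^ 2 / (16 * c1) * F / (Rpower tau (1 - alpha) / Gamma (2 - alpha) / tau / 2)
           / dw alpha (INR M))
    with (l ^ 2 * F * Gamma (2 - alpha) / (8 * c1 * (1 - alpha))
          / (Rpower tau (1 - alpha) / tau * Rpower (INR M) (- alpha))).
  2:{ unfold dw. assert (0 < Rpower tau (1 - alpha)) by apply Rpower_pos.
      assert (0 < Rpower (INR M) (- alpha)) by apply Rpower_pos. field. repeat split; lra. }
  rewrite Eprod.
  replace (l ^ 2 * F * Gamma (2 - alpha) / (8 * c1 * (1 - alpha)) / / Rpower T alpha)
    with (l ^ 2 * Rpower T alpha / (4 * c1) * F * (Gamma (2 - alpha) / (2 * (1 - alpha))))
    by (field; repeat split; lra).
  replace (l ^ 2 * Rpower T alpha * Gamma (1 - alpha) / (4 * c1) * F)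
    with (l ^ 2 * Rpower T alpha / (4 * c1) * F * Gamma (1 - alpha)) by (field; lra).
  apply Rmult_le_compat_l.
  - apply Rmult_le_pos; [|lra]. apply Rdiv_le_0_compat; [|lra]. apply Rmult_le_pos; [nra | lra].
  - apply Rle_trans with (1 / (2 * (1 - alpha))); [|lra].
    apply Rmult_le_compat_r; [left; apply Rinv_0_lt_compat|]; lra.
Qed.

Theorem theorem3
  (alpha l T c1 : R) (N M : nat)
  (k q f : R -> R -> R) (u0 : R -> R) (y : nat -> nat -> R) :
  0 < alpha < 1 -> 0 < l -> 0 < T -> (1 <= N)%nat -> (1 <= M)%nat ->
  0 < c1 ->
  cont_on_rect l T k -> cont_on_rect l T q -> cont_on_rect l T f ->
  (forall x t, rect l T (x, t) -> c1 <= k x t) ->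
  (forall x t, rect l T (x, t) -> 0 <= q x t) ->
  let sigma := 1 - alpha / 2 in
  let h := l / INR N in
  let tau := T / INR M in
  let tsig := fun j : nat => (INR j + sigma) * tau in
  let a := fun j i : nat => k ((INR i - 1 / 2) * h) (tsig j) in   (* a_i^{j+1} *)
  let d := fun j i : nat => q (INR i * h) (tsig j) in             (* d_i^{j+1} *)
  let phi := fun j i : nat => f (INR i * h) (tsig j) in           (* phi_i^{j+1} *)
  let ysig := fun j i : nat => sigma * y (S j) i + (1 - sigma) * y j i in
  let Lam := fun j i : nat =>
    (a j (S i) * ysig j (S i) - (a j (S i) + a j i) * ysig j i + a j i * ysig j (i - 1)%nat)
      / (h * h) - d j i * ysig j i in
  (forall j i, (j <= M - 1)%nat -> (1 <= i <= N - 1)%nat ->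
     frac_deriv alpha sigma tau y j i = Lam j i + phi j i) ->
  (forall j, (j <= M)%nat -> y j 0%nat = 0 /\ y j N = 0) ->
  (forall i, (1 <= i <= N - 1)%nat -> y 0%nat i = u0 (INR i * h)) ->
  forall j, (j <= M - 1)%nat ->
    norm0sq N h (y (S j)) <=
    norm0sq N h (y 0%nat)
    + l ^ 2 * Rpower T alpha * Gamma (1 - alpha) / (4 * c1)
      * maxR M (fun jj => norm0sq N h (phi (jj - 1)%nat)).
Proof.
  (* continuity of the data and the initial values play no role in the estimate *)
  intros Hal Hl HT HN HM Hc1 _ _ _ Hk Hq sigma h tau tsig a d phi ysig Lam Hsch Hbd _ j Hj.
  assert (Hh : 0 < h) by (apply Rdiv_lt_0_compat; [lra | apply lt_0_INR; lia]).
  assert (Htau : 0 < tau) by (apply Rdiv_lt_0_compat; [lra | apply lt_0_INR; lia]).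
  set (K := Rpower tau (1 - alpha) / Gamma (2 - alpha) / tau / 2).
  assert (HK : 0 < K) by (apply Rdiv_lt_0_compat; [apply l1_scale_pos |]; lra).
  set (F := maxR M (fun jj => norm0sq N h (phi (jj - 1)%nat))).
  assert (HF : 0 <= F) by apply maxR_nonneg.
  eapply Rle_trans.
  - apply (c_coef_stability alpha M (fun r => norm0sq N h (y r)) (l ^ 2 / (16 * c1) * F / K)); auto.
    { apply Rdiv_le_0_compat; [apply Rmult_le_pos; [apply Rdiv_le_0_compat; [apply pow2_ge_0|] |] |]; lra. }
    intros jj Hjj. destruct (Hbd jj ltac:(lia)), (Hbd (S jj) ltac:(lia)).
    assert (Hsig : 0 <= INR jj + sigma <= INR M).
    { assert (0 <= INR jj) by apply pos_INR. assert (INR jj <= INR M - 1) by (apply INR_le_pred; lia).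
      unfold sigma; lra. }
    eapply Rle_trans; [apply (scheme_level_le alpha c1 h tau N jj (a jj) (d jj) (phi jj) y); auto|].
    + intros i Hi. apply Hk, rect_grid_point; auto.
      assert (1 <= INR i <= INR N) by (split; [apply (le_INR 1) | apply le_INR]; lia). lra.
    + intros i Hi. apply Hq, rect_grid_point; auto. split; [apply pos_INR | apply le_INR; lia].
    + replace (INR N * h) with l by (unfold h; field; apply not_0_INR; lia).
      apply Rmult_le_compat_r; [left; apply Rinv_0_lt_compat; lra|].
      apply Rmult_le_compat_l; [apply Rdiv_le_0_compat; [apply pow2_ge_0 | lra]|].
      replace (phi jj) with (phi (S jj - 1)%nat) by (f_equal; lia).
      apply (maxR_ge M (fun jj => norm0sq N h (phi (jj - 1)%nat))); lia.
  - apply Rplus_le_compat_l, stability_constant_le; auto.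
Qed.
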